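(* Let $p\geq 2$ be an integer, $n=2^p-1$ and $s=3\cdot 2^{p-2}$. Then there exists a perfect code $C$ in the hypercube $Q_n$ such that no element of $C$ contains $1^s$ as a substring.
   Context: The $n$-cube $Q_n$ is the graph whose vertex set is the set $\mathbb{B}_n$ of binary strings of length $n$, two strings being adjacent if they differ in exactly one position; its graph distance is the Hamming distance. A perfect code in a graph $G$ is a set $C$ of vertices such that every vertex of $G$ lies in the closed neighbourhood $N[c]=\{v: d_G(c,v)\le 1\}$ of exactly one vertex $c\in C$ (equivalently, $C$ is a dominating set and any two distinct elements of $C$ are at distance at least $3$). $1^s$ denotes the string of $s$ consecutive 1's; a string $\bm{f}$ is a substring of $\bm{s}$ if $\bm{s}=\bm{x}\bm{f}\bm{y}$ for some (possibly empty) strings $\bm{x},\bm{y}$. *)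

From mathcomp Require Import all_boot.
Set Implicit Arguments. Unset Strict Implicit. Unset Printing Implicit Defensive.

(* Vertices of the n-cube Q_n: binary strings of length n. *)
Definition bstring (n : nat) := (n.-tuple bool).

(* Hamming distance = graph distance in Q_n. *)
Definition hamming (n : nat) (u v : bstring n) : nat :=
  count id [seq x.1 != x.2 | x <- zip (val u) (val v)].

Definition closed_nbhd (n : nat) (c : bstring n) : {set bstring n} :=
  [set v | hamming c v <= 1].

Definition perfect_code (n : nat) (C : {set bstring n}) : Prop :=
  forall v : bstring n, #|[set c in C | v \in closed_nbhd c]| = 1.

Definition substring (f s : seq bool) : bool := infix f s.

Definition ones (s : nat) : seq bool := nseq s true.

From HB Require Import structures.
From Stdlib Require Import PeanoNat.
From mathcomp Require Import all_boot zify.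
Set Implicit Arguments. Unset Strict Implicit. Unset Printing Implicit Defensive.

(* The code is a coset of the Hamming code: writing p = k + 2, it consists of
   the words whose syndrome (the XOR of the positions, numbered from 1, of
   their ones) is 2^k.  Flipping position j XORs the syndrome with j, so every
   word is within distance 1 of exactly one codeword.
   Bit k of the Gray code of x, i.e. bit k+1 XOR bit k of x, is XOR-additive
   and, below 4 * 2^k, equals 1 exactly on [2^k, 3 * 2^k).  Applied to the
   syndrome it gives the parity of the number of ones of the word in that
   window of 2^(k+1) positions.  A block of 3 * 2^k ones in a word of length
   4 * 2^k - 1 covers the whole window, so this parity is even, whereas the
   Gray bit of 2^k is 1. *)

Lemma expn_pow m n : m ^ n = Nat.pow m n.
Proof. by elim: n => // n IH; rewrite expnS IH. Qed.

Lemma lxor_ltn_pow2 a b k : a < 2 ^ k -> b < 2 ^ k -> Nat.lxor a b < 2 ^ k.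
Proof.
rewrite expn_pow => /ltP a_lt /ltP b_lt; apply/ltP.
have k_pos : Nat.pow 2 k <> 0 by apply: Nat.pow_nonzero.
apply/(Nat.div_small_iff _ _ k_pos); rewrite -Nat.shiftr_div_pow2 Nat.shiftr_lxor.
by rewrite !Nat.shiftr_div_pow2 !Nat.div_small.
Qed.

Lemma lxorA : associative Nat.lxor.
Proof. by move=> a b c; rewrite Nat.lxor_assoc. Qed.

HB.instance Definition _ :=
  Monoid.isComLaw.Build nat 0 Nat.lxor lxorA Nat.lxor_comm Nat.lxor_0_l.

Definition syndrome n (v : bstring n) : nat :=
  \big[Nat.lxor/0]_(i < n) (if tnth v i then i.+1 else 0).

(* Positions are numbered from 1, as in the syndrome; [flip 0 v = v]. *)
Definition flip n (j : nat) (v : bstring n) : bstring n :=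
  [tuple tnth v i (+) (i.+1 == j) | i < n].

Lemma flip0 n (v : bstring n) : flip 0 v = v.
Proof. by apply: eq_from_tnth => i; rewrite tnth_mktuple addbF. Qed.

Lemma hammingE n (u v : bstring n) :
  hamming u v = #|[pred i : 'I_n | tnth u i != tnth v i]|.
Proof.
rewrite /hamming -[val u]map_tnth_enum -[val v]map_tnth_enum.
rewrite zip_map count_map enumT cardE /enum_mem size_filter count_map.
exact: eq_count.
Qed.

Lemma hamming_le1P n (u v : bstring n) :
  hamming u v <= 1 <-> exists2 j, j <= n & u = flip j v.
Proof.
rewrite hammingE; split=> [|[j j_le ->]].
  case: (pickP [pred i | tnth u i != tnth v i]) => [j uv_j /card_le1P le1 | uv0].
    exists j.+1; first exact: ltn_ord.
    apply: eq_from_tnth => i; rewrite tnth_mktuple eqSS.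
    have := le1 j uv_j i; rewrite !inE -(inj_eq val_inj) /= => <-.
    by case: (tnth u i); case: (tnth v i).
  exists 0 => //; rewrite flip0; apply: eq_from_tnth => i.
  by apply/eqP; move: (uv0 i) => /= /negbT; rewrite negbK.
case: j j_le => [|j] j_lt.
  by rewrite flip0 eq_card0 // => i; rewrite inE eqxx.
rewrite -(card1 (Ordinal j_lt)); apply: subset_leq_card; apply/subsetP => i.
by rewrite !inE tnth_mktuple eqSS -val_eqE /=; case: (tnth v i); case: (i == j :> nat).
Qed.

Lemma syndrome_flip n (v : bstring n) j :
  j <= n -> syndrome (flip j v) = Nat.lxor (syndrome v) j.
Proof.
move=> j_le; have weight_j : \big[Nat.lxor/0]_(i < n) (if i.+1 == j then i.+1 else 0) = j.
  case: j j_le => [_|j j_lt]; first exact: big1.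
  by rewrite -big_mkcond (big_pred1 (Ordinal j_lt)) // => i; rewrite eqSS -val_eqE.
rewrite /syndrome -[in RHS]weight_j -big_split /=; apply: eq_bigr => i _.
rewrite tnth_mktuple; case: (tnth v i); case: (i.+1 == j) => /=;
  by rewrite ?Nat.lxor_0_r ?Nat.lxor_0_l ?Nat.lxor_nilpotent.
Qed.

Lemma syndrome_ltn_pow2 n k (v : bstring n) : n < 2 ^ k -> syndrome v < 2 ^ k.
Proof.
move=> n_lt; rewrite /syndrome; elim/big_ind: _ => [|a b|i _].
- by rewrite expn_gt0.
- exact: lxor_ltn_pow2.
- by case: (tnth v i); [apply: leq_ltn_trans n_lt | rewrite expn_gt0].
Qed.

Lemma perfect_code_syndrome p a :
  a < 2 ^ p -> perfect_code [set c : bstring (2 ^ p - 1) | syndrome c == a].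
Proof.
move=> a_lt v; apply/eqP/cards1P.
set t := Nat.lxor (syndrome v) a.
have n_lt : 2 ^ p - 1 < 2 ^ p by rewrite ltn_subrL expn_gt0.
have t_le : t <= 2 ^ p - 1.
  by have := lxor_ltn_pow2 (syndrome_ltn_pow2 v n_lt) a_lt; rewrite -/t; lia.
exists (flip t v); apply/setP => c; rewrite !inE.
apply/andP/eqP => [[/eqP c_a /hamming_le1P [j j_le c_j]] | ->].
  rewrite c_j syndrome_flip // in c_a.
  by rewrite c_j /t -c_a -Nat.lxor_assoc Nat.lxor_nilpotent Nat.lxor_0_l.
split; last by apply/hamming_le1P; exists t.
by rewrite syndrome_flip // /t -Nat.lxor_assoc Nat.lxor_nilpotent Nat.lxor_0_l.
Qed.

Definition gray_bit k x := Nat.testbit x k.+1 (+) Nat.testbit x k.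

Lemma gray_bit0 k : gray_bit k 0 = false.
Proof. by rewrite /gray_bit !Nat.bits_0. Qed.

Lemma gray_bit_lxor k a b : gray_bit k (Nat.lxor a b) = gray_bit k a (+) gray_bit k b.
Proof.
rewrite /gray_bit !Nat.lxor_spec.
by case: (Nat.testbit a k.+1); case: (Nat.testbit a k);
   case: (Nat.testbit b k.+1); case: (Nat.testbit b k).
Qed.

Lemma gray_bitE k x : x < 4 * 2 ^ k -> gray_bit k x = (2 ^ k <= x < 3 * 2 ^ k).
Proof.
rewrite expn_pow /gray_bit => x_lt; set q := Nat.pow 2 k in x_lt *.
have q_neq0 : q <> 0 by apply: Nat.pow_nonzero.
have -> : Nat.testbit x k.+1 = Nat.testbit (x / q) 1 by rewrite Nat.div_pow2_bits.
have -> : Nat.testbit x k = Nat.testbit (x / q) 0 by rewrite Nat.div_pow2_bits.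
have := Nat.div_mod x q q_neq0; have := Nat.mod_upper_bound x q q_neq0.
have : (x / q < 4)%coq_nat by apply: Nat.Div0.div_lt_upper_bound; lia.
by case: (x / q) => [|[|[|[|d]]]] d_lt r_lt x_eq; rewrite /= /Nat.odd /=; lia.
Qed.

Lemma gray_bit_syndrome k n (v : bstring n) :
  gray_bit k (syndrome v) = odd (\sum_(i < n) (tnth v i && gray_bit k i.+1)).
Proof.
rewrite /syndrome (big_morph (gray_bit k) (gray_bit_lxor k) (gray_bit0 k)).
rewrite (big_morph odd oddD (erefl (odd 0))); apply: eq_bigr => i _.
by case: (tnth v i); rewrite ?gray_bit0 oddb.
Qed.

Lemma sum_nat_interval a b n : \sum_(0 <= i < n) (a <= i < b) = minn b n - minn a n.
Proof.
elim: n => [|n IH]; first by rewrite big_geq // !minn0.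
by rewrite big_nat_recr //= IH; lia.
Qed.

Lemma substring_ones_tnth n s (v : bstring n) : substring (ones s) (val v) ->
  exists2 i0, i0 + s <= n & forall i : 'I_n, i0 <= i < i0 + s -> tnth v i.
Proof.
move=> /infixP [pre [suf v_eq]]; exists (size pre).
  by rewrite -(size_tuple v) v_eq !size_cat size_nseq addnA leq_addr.
move=> i /andP [pre_le i_lt]; rewrite (tnth_nth false) v_eq nth_cat ltnNge pre_le /=.
have i_s : i - size pre < s by lia.
by rewrite nth_cat size_nseq i_s nth_nseq i_s.
Qed.

Lemma gray_bit_syndrome_ones k n (v : bstring n) :
  n < 4 * 2 ^ k -> substring (ones (3 * 2 ^ k)) (val v) -> gray_bit k (syndrome v) = false.
Proof.
move=> n_lt /substring_ones_tnth [i0 block_le block_ones].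
have q_pos : 0 < 2 ^ k by rewrite expn_gt0.
have block_covers (i : 'I_n) : gray_bit k i.+1 -> tnth v i.
  have i_lt := ltn_ord i; rewrite gray_bitE; last by lia.
  by move=> gray_i; apply: block_ones; lia.
rewrite gray_bit_syndrome.
have -> : \sum_(i < n) (tnth v i && gray_bit k i.+1)
          = \sum_(0 <= i < n) (2 ^ k - 1 <= i < 3 * 2 ^ k - 1).
  rewrite big_mkord; apply: eq_bigr => i _; have i_lt := ltn_ord i.
  have -> : (2 ^ k - 1 <= i < 3 * 2 ^ k - 1) = gray_bit k i.+1 by rewrite gray_bitE; lia.
  by case: (boolP (gray_bit k i.+1)) => [/block_covers ->|_]; rewrite ?andbF.
rewrite sum_nat_interval.
have -> : minn (3 * 2 ^ k - 1) n - minn (2 ^ k - 1) n = (2 ^ k).*2 by lia.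
exact: odd_double.
Qed.

Theorem theorem2 (p : nat) (hp : 2 <= p) :
  exists C : {set bstring (2 ^ p - 1)},
    perfect_code C /\
    forall c, c \in C -> ~~ substring (ones (3 * 2 ^ (p - 2))) (val c).
Proof.
have [k ->] : exists k, p = k.+2 by exists (p - 2); lia.
rewrite !subSS subn0.
exists [set c | syndrome c == 2 ^ k]; split.
  by apply: perfect_code_syndrome; rewrite ltn_exp2l.
have n_lt : 2 ^ k.+2 - 1 < 4 * 2 ^ k by rewrite !expnS; lia.
move=> c; rewrite inE => /eqP c_k; apply/negP => /(gray_bit_syndrome_ones n_lt).
by rewrite c_k gray_bitE; lia.
Qed.
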